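(* Let $\Pi=(P_R,\psi)$ be a 3SS scheme with domain $\mathcal S$, let $P_{\mathbf X}$ be any distribution with support contained in $\mathcal S$, $\mathbf X=(X_1,X_2,X_3)\sim P_{\mathbf X}$, $R\sim P_R$ independent of $\mathbf X$, and $(W_{12},W_{23},W_{31})=\psi(\mathbf X,R)$. Then $$I(W_{12};W_{23}\mid W_{31})\ \ge\ RI(X_1;X_3),\quad I(W_{23};W_{31}\mid W_{12})\ \ge\ RI(X_2;X_1),\quad I(W_{31};W_{12}\mid W_{23})\ \ge\ RI(X_3;X_2).$$
   Context: Setup: $\mathcal X_1,\mathcal X_2,\mathcal X_3$ finite, $\mathcal S\subseteq\mathcal X_1\times\mathcal X_2\times\mathcal X_3$ nonempty. A distribution scheme $(P_R,\psi)$ consists of a distribution $P_R$ on a finite set $\mathcal R$ and a map $\psi:\mathcal S\times\mathcal R\to\mathcal W_{12}\times\mathcal W_{23}\times\mathcal W_{31}$ (finite share alphabets); shares are $(W_{12},W_{23},W_{31})=\psi(\mathbf x,R)$. Party $P_1$ sees $V_1=(W_{12},W_{31})$, $P_2$ sees $V_2=(W_{23},W_{12})$, $P_3$ sees $V_3=(W_{31},W_{23})$. It is a 3SS scheme if (Correctness) for each $i$ there is a function $\phi_i$ with $\Pr[\phi_i(V_i)=x_i]=1$ for every $\mathbf x\in\mathcal S$, and (Perfect privacy) for each $i$ and all $\mathbf x,\mathbf x'\in\mathcal S$ with $x_i=x'_i$, $V_i$ has the same distribution under $\mathbf x$ as under $\mathbf x'$. Residual information: for jointly distributed discrete $A,B$,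 let $A\wedge B$ denote the Gács–Körner common part (the maximal common function: the label of the connected component containing $(A,B)$ in the bipartite graph on $\mathrm{supp}(A)\cup\mathrm{supp}(B)$ with an edge $(a,b)$ iff $P_{AB}(a,b)>0$); then $RI(A;B):=I(A;B)-H(A\wedge B)=I(A;B\mid A\wedge B)$. *)

From HB Require Import structures.
From mathcomp Require Import all_boot all_order all_algebra.
From mathcomp Require Import reals exp.
Set Implicit Arguments. Unset Strict Implicit. Unset Printing Implicit Defensive.
Import Order.TTheory GRing.Theory Num.Theory.
Local Open Scope ring_scope.

Section InfoTheory.
Variable R : realType.

Definition is_pmf (T : finType) (p : {ffun T -> R}) : Prop :=
  (forall t, 0 <= p t) /\ \sum_(t : T) p t = 1.

Definition dist (O A : finType) (p : {ffun O -> R}) (f : O -> A) (a : A) : R :=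
  \sum_(w : O | f w == a) p w.

Definition xlnx (x : R) : R := if x == 0 then 0 else x * ln x.

Definition entropy (O A : finType) (p : {ffun O -> R}) (f : O -> A) : R :=
  - \sum_(a : A) xlnx (dist p f a).

Definition mutinfo (O A B : finType) (p : {ffun O -> R}) (f : O -> A) (g : O -> B) : R :=
  entropy p f + entropy p g - entropy p (fun w => (f w, g w)).

Definition cmutinfo (O A B C : finType) (p : {ffun O -> R})
    (f : O -> A) (g : O -> B) (h : O -> C) : R :=
  entropy p (fun w => (f w, h w)) + entropy p (fun w => (g w, h w))
  - entropy p (fun w => (f w, g w, h w)) - entropy p h.

(* Gacs-Korner common part: bipartite graph on A + B (the supports; isolated
   vertices are irrelevant), edge {a,b} iff P_{fg}(a,b) > 0; the common part
   of (f,g) is the label (root) of the connected component containing f w. *)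
Definition gk_edge (O A B : finType) (p : {ffun O -> R}) (f : O -> A) (g : O -> B)
    : rel (A + B) :=
  fun u v => match u, v with
             | inl a, inr b => 0 < dist p (fun w => (f w, g w)) (a, b)
             | inr b, inl a => 0 < dist p (fun w => (f w, g w)) (a, b)
             | _, _ => false
             end.

Definition gk_common (O A B : finType) (p : {ffun O -> R}) (f : O -> A) (g : O -> B)
    (w : O) : A + B :=
  fingraph.root (gk_edge p f g) (inl (f w)).

Definition resinfo (O A B : finType) (p : {ffun O -> R}) (f : O -> A) (g : O -> B) : R :=
  mutinfo p f g - entropy p (gk_common p f g).

(* psi is given as a total map; only its values on S matter. *)
Definition share_dist (Rt V : finType) (PR : {ffun Rt -> R})
    (view : Rt -> V) (v : V) : R :=
  \sum_(r : Rt | view r == v) PR r.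

Definition is_3SS (T1 T2 T3 Rt W12 W23 W31 : finType) (S : {set T1 * T2 * T3})
    (PR : {ffun Rt -> R}) (psi : T1 * T2 * T3 -> Rt -> W12 * W23 * W31) : Prop :=
  let w12 x r := (psi x r).1.1 in
  let w23 x r := (psi x r).1.2 in
  let w31 x r := (psi x r).2 in
  let V1 x r := (w12 x r, w31 x r) in
  let V2 x r := (w23 x r, w12 x r) in
  let V3 x r := (w31 x r, w23 x r) in
  [/\ is_pmf PR,
   (* correctness: Pr[phi_i(V_i) = x_i] = 1 for every x in S *)
   (exists phi1 : W12 * W31 -> T1, forall x r, x \in S -> 0 < PR r -> phi1 (V1 x r) = x.1.1),
   (exists phi2 : W23 * W12 -> T2, forall x r, x \in S -> 0 < PR r -> phi2 (V2 x r) = x.1.2),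
   (exists phi3 : W31 * W23 -> T3, forall x r, x \in S -> 0 < PR r -> phi3 (V3 x r) = x.2) &
   [/\ forall x x', x \in S -> x' \in S -> x.1.1 = x'.1.1 ->
         forall v, share_dist PR (V1 x) v = share_dist PR (V1 x') v,
       forall x x', x \in S -> x' \in S -> x.1.2 = x'.1.2 ->
         forall v, share_dist PR (V2 x) v = share_dist PR (V2 x') v &
       forall x x', x \in S -> x' \in S -> x.2 = x'.2 ->
         forall v, share_dist PR (V3 x) v = share_dist PR (V3 x') v]].

Definition joint (T Rt : finType) (PX : {ffun T -> R}) (PR : {ffun Rt -> R})
    : {ffun T * Rt -> R} :=
  [ffun w => PX w.1 * PR w.2].

End InfoTheory.

From HB Require Import structures.
From mathcomp Require Import all_boot all_order all_algebra.
From mathcomp Require Import reals exp.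
From mathcomp.algebra_tactics Require Import ring lra.
Import Order.TTheory GRing.Theory Num.Theory.
Local Open Scope ring_scope.
Set Implicit Arguments. Unset Strict Implicit. Unset Printing Implicit Defensive.

(* For random variables A, B, C, X, Y on a finite probability space we show
     RI(X;Y) <= I(A;B|C)
   whenever X is a function of (A,C), Y is a function of (B,C), and C is
   conditionally independent of Y given X and of X given Y.  This follows from
   data processing, I(A;B|C) >= I(X;Y|C), and from I(X;Y|C) >= RI(X;Y), a
   consequence of the double Markov property: the two conditional
   independences force C to be conditionally independent of (X,Y) given the
   Gacs-Korner common part Q of (X,Y).  The theorem is the
   inequality applied to the three cyclic rotations of the parties. *)

Section FiniteProbability.
Variables (R : realType) (O : finType) (p : {ffun O -> R}).
Hypothesis p_ge0 : forall w, 0 <= p w.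
Hypothesis p_sum1 : \sum_w p w = 1.

Lemma xlnxE (x : R) : xlnx x = x * ln x.
Proof. by rewrite /xlnx; case: eqP => [->|]; rewrite ?mul0r. Qed.

Lemma dist_ge0 (A : finType) (f : O -> A) a : 0 <= dist p f a.
Proof. exact: sumr_ge0. Qed.

Lemma dist_relabel (A B : finType) (f : O -> A) (g : O -> B) a b :
  (forall w, (f w == a) = (g w == b)) -> dist p f a = dist p g b.
Proof. by move=> fg; apply: eq_bigl => w; rewrite fg. Qed.

Lemma dist_mono (A B : finType) (f : O -> A) (g : O -> B) a b :
  (forall w, f w == a -> g w == b) -> dist p f a <= dist p g b.
Proof.
move=> fg; rewrite /dist [X in _ <= X]big_mkcond [X in X <= _]big_mkcond /=.
by apply: ler_sum => w _; case: ifP => [/fg -> //|_]; case: ifP.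
Qed.

Lemma dist_pos (A : finType) (f : O -> A) w : p w != 0 -> 0 < dist p f (f w).
Proof.
move=> pw; apply: (@lt_le_trans _ _ (p w)); first by rewrite lt0r pw p_ge0.
by rewrite /dist (bigD1 w) //= lerDl sumr_ge0.
Qed.

Lemma dist_swap (A B : finType) (f : O -> A) (g : O -> B) a b :
  dist p (fun w => (g w, f w)) (b, a) = dist p (fun w => (f w, g w)) (a, b).
Proof. by apply: dist_relabel => w; rewrite !xpair_eqE andbC. Qed.

Lemma dist_marg (A B : finType) (f : O -> A) (g : O -> B) a :
  dist p f a = \sum_b dist p (fun w => (f w, g w)) (a, b).
Proof. by rewrite /dist (partition_big g predT). Qed.

Lemma dist_comp (A B : finType) (f : O -> A) (G : A -> B) b :
  dist p (fun w => G (f w)) b = \sum_(a | G a == b) dist p f a.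
Proof.
rewrite /dist (partition_big f (fun a => G a == b)) //=.
apply: eq_bigr => a /eqP Gab; apply: eq_bigl => w.
by case: (eqVneq (f w) a) => [->|]; rewrite ?Gab ?eqxx ?andbF.
Qed.

Lemma dist_graph (B C : finType) (g : O -> B) (F : B -> C) b c :
  dist p (fun w => (g w, F (g w))) (b, c) = if F b == c then dist p g b else 0.
Proof.
case: eqP => [<-|Fbc].
  by apply: dist_relabel => w; rewrite xpair_eqE; case: eqP => [->|]; rewrite ?eqxx.
apply: big_pred0 => w; rewrite xpair_eqE.
by case: eqP => [->|//]; apply/eqP.
Qed.

Lemma dist_pair_const (A K : finType) (f : O -> A) (k : K) a b :
  dist p (fun w => (f w, k)) (a, b) = if k == b then dist p f a else 0.
Proof.
case: eqP => [<-|kb]; first by apply: dist_relabel => w; rewrite xpair_eqE eqxx andbT.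
by apply: big_pred0 => w; rewrite xpair_eqE; apply/andP => -[_ /eqP].
Qed.

Lemma dist_const (K : finType) (k : K) b : dist p (fun _ => k) b = if k == b then 1 else 0.
Proof. by rewrite /dist; case: eqP => _; [rewrite -p_sum1 | rewrite big_pred0]. Qed.

Lemma dist_sum1 (A : finType) (f : O -> A) : \sum_a dist p f a = 1.
Proof. by rewrite -p_sum1 [RHS](partition_big f predT). Qed.

Lemma expect_comp (A : finType) (f : O -> A) (F : A -> R) :
  \sum_w p w * F (f w) = \sum_a dist p f a * F a.
Proof.
rewrite (partition_big f predT) //=; apply: eq_bigr => a _.
by rewrite /dist big_distrl; apply: eq_bigr => w /eqP ->.
Qed.

Lemma entropy_expect (A : finType) (f : O -> A) :
  entropy p f = - \sum_w p w * ln (dist p f (f w)).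
Proof.
rewrite (expect_comp f (fun a => ln (dist p f a))) /entropy.
by under eq_bigr do rewrite xlnxE.
Qed.

Lemma entropy_relabel (A B : finType) (f : O -> A) (g : O -> B) (u : B -> A) (v : A -> B) :
  (forall w, p w != 0 -> f w = u (g w)) -> (forall w, p w != 0 -> g w = v (f w)) ->
  entropy p f = entropy p g.
Proof.
move=> fE gE; rewrite !entropy_expect; congr (- _); apply: eq_bigr => w _.
have [->|pw] := eqVneq (p w) 0; first by rewrite !mul0r.
congr (_ * ln _); rewrite /dist [LHS]big_mkcond [RHS]big_mkcond /=.
apply: eq_bigr => w' _; have [->|pw'] := eqVneq (p w') 0; first by rewrite !if_same.
suff -> : (f w' == f w) = (g w' == g w) by [].
by apply/eqP/eqP => e; [rewrite (gE w') // (gE w) // e | rewrite (fE w') // (fE w) // e].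
Qed.

Lemma entropy_swap (A B : finType) (f : O -> A) (g : O -> B) :
  entropy p (fun w => (f w, g w)) = entropy p (fun w => (g w, f w)).
Proof. exact: (entropy_relabel (u := fun t => (t.2, t.1)) (v := fun t => (t.2, t.1))). Qed.

Definition cond_indep (A B C : finType) (f : O -> A) (g : O -> B) (h : O -> C) : Prop :=
  forall a b c, dist p (fun w => (f w, g w, h w)) (a, b, c) * dist p h c =
                dist p (fun w => (f w, h w)) (a, c) * dist p (fun w => (g w, h w)) (b, c).

Lemma cond_indepE (A B C : finType) (f : O -> A) (g : O -> B) (h : O -> C) a b c :
  cond_indep f g h -> 0 < dist p h c ->
  dist p (fun w => (f w, g w, h w)) (a, b, c) =
  dist p (fun w => (f w, h w)) (a, c) / dist p h c * dist p (fun w => (g w, h w)) (b, c).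
Proof.
move=> fgh hc; apply: (@mulIf _ (dist p h c)); first by rewrite gt_eqF.
by rewrite fgh mulrAC divfK // gt_eqF.
Qed.

Section ConditionalMutualInformation.
Variables (A B C : finType) (f : O -> A) (g : O -> B) (h : O -> C).
Let fh w := (f w, h w).
Let gh w := (g w, h w).
Let fgh w := (f w, g w, h w).
Let D (K : finType) (k : O -> K) w := dist p k (k w).

Lemma cmi_expect : cmutinfo p f g h =
  \sum_w p w * (ln (D fgh w) + ln (D h w) - ln (D fh w) - ln (D gh w)).
Proof.
rewrite (eq_bigr (fun w => p w * ln (D fgh w) + p w * ln (D h w) - p w * ln (D fh w)
  - p w * ln (D gh w))); last by move=> w _; ring.
by rewrite !sumrB big_split /cmutinfo !entropy_expect /=; ring.
Qed.

Lemma cmi_eq0 : cond_indep f g h -> cmutinfo p f g h = 0.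
Proof.
move=> fgh_ind; rewrite cmi_expect big1 // => w _.
have [->|pw] := eqVneq (p w) 0; first by rewrite mul0r.
have := congr1 (@ln R) (fgh_ind (f w) (g w) (h w)).
by rewrite !lnM ?posrE ?dist_pos // /D => ->; rewrite /fh /gh; ring.
Qed.

(* The key estimate behind Gibbs' inequality for conditional mutual information:
   the sum over (a,b,c) of P(a,c) P(b,c) / P(c) is at most one. *)
Lemma cmi_ratio_sum_le1 :
  \sum_w p w * (D fh w * D gh w / (D fgh w * D h w)) <= 1.
Proof.
pose G (a : A) (b : B) (c : C) :=
  dist p fh (a, c) * (dist p gh (b, c) / dist p h c).
have termwise (t : A * B * C) : dist p fgh t *
    (dist p fh (t.1.1, t.2) * dist p gh (t.1.2, t.2) / (dist p fgh t * dist p h t.2))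
    <= G t.1.1 t.1.2 t.2.
  have [->|nz] := eqVneq (dist p fgh t) 0.
    by rewrite mul0r /G mulr_ge0 ?divr_ge0 ?dist_ge0.
  by rewrite invfM mulrCA mulVKf // /G mulrA.
have slice (c : C) : \sum_a \sum_b G a b c <= dist p h c.
  rewrite -big_distrlr -mulr_suml /=.
  under eq_bigr do rewrite /fh dist_swap.
  under [X in _ * (X / _)]eq_bigr do rewrite /gh dist_swap.
  rewrite -(dist_marg h f c) -(dist_marg h g c).
  have [->|nz] := eqVneq (dist p h c) 0; first by rewrite mul0r.
  by rewrite divff // mulr1.
rewrite (expect_comp fgh (fun t => dist p fh (t.1.1, t.2) * dist p gh (t.1.2, t.2) /
  (dist p fgh t * dist p h t.2))).
apply: (le_trans (ler_sum _ (fun t _ => termwise t))).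
rewrite -(pair_bigA _ (fun ab c => G ab.1 ab.2 c)) exchange_big /= -(dist_sum1 h).
by apply: ler_sum => c _; rewrite -(pair_bigA _ (fun a b => G a b c)).
Qed.

(* Gibbs' inequality, via ln x <= x - 1. *)
Lemma cmi_ge0 : 0 <= cmutinfo p f g h.
Proof.
rewrite cmi_expect.
pose K w := D fh w * D gh w / (D fgh w * D h w).
apply: (@le_trans _ _ (\sum_w (p w - p w * K w))).
  by rewrite sumrB p_sum1 subr_ge0 cmi_ratio_sum_le1.
apply: ler_sum => w _.
have [->|pw] := eqVneq (p w) 0; first by rewrite !mul0r subrr.
have Pfh := dist_pos fh pw; have Pgh := dist_pos gh pw.
have Pfgh := dist_pos fgh pw; have Ph := dist_pos h pw.
have lnK : ln (K w) = ln (D fh w) + ln (D gh w) - ln (D fgh w) - ln (D h w).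
  by rewrite /K ln_div ?posrE ?mulr_gt0 // !lnM ?posrE //; ring.
have lnK_le : ln (K w) <= K w - 1.
  have K_gt0 : 0 < K w by rewrite /K /D divr_gt0 ?mulr_gt0.
  by have := @le_ln1Dx _ (K w - 1); rewrite addrCA subrr addr0; apply; lra.
have := p_ge0 w; nra.
Qed.

End ConditionalMutualInformation.

Lemma cmi_sym (A B C : finType) (f : O -> A) (g : O -> B) (h : O -> C) :
  cmutinfo p f g h = cmutinfo p g f h.
Proof.
rewrite /cmutinfo (entropy_relabel (f := fun w => (f w, g w, h w))
  (g := fun w => (g w, f w, h w)) (u := fun t => (t.1.2, t.1.1, t.2))
  (v := fun t => (t.1.2, t.1.1, t.2))) //; ring.
Qed.

Lemma entropy_le_pair (A C : finType) (f : O -> A) (h : O -> C) :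
  entropy p h <= entropy p (fun w => (f w, h w)).
Proof.
have := cmi_ge0 f f h; rewrite /cmutinfo.
rewrite (entropy_relabel (f := fun w => (f w, f w, h w)) (g := fun w => (f w, h w))
  (u := fun t => (t.1, t.1, t.2)) (v := fun t => (t.1.1, t.2))) //; lra.
Qed.

(* Data processing: if x is almost surely a function of (a,c), then
   I(x;b|c) <= I(a;b|c); the gap is I(a;b|x,c) >= 0. *)
Lemma cmi_data_processing (A B C X : finType) (fa : O -> A) (fb : O -> B) (fc : O -> C)
    (fx : O -> X) (phi : A -> C -> X) :
  (forall w, p w != 0 -> fx w = phi (fa w) (fc w)) ->
  cmutinfo p fx fb fc <= cmutinfo p fa fb fc.
Proof.
move=> fxE.
have EA : entropy p (fun w => (fa w, (fx w, fc w))) = entropy p (fun w => (fa w, fc w)).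
  by apply: (entropy_relabel (u := fun t => (t.1, (phi t.1 t.2, t.2))) (v := fun t => (t.1, t.2.2)))
    => // w /fxE ->.
have EAB : entropy p (fun w => (fa w, fb w, (fx w, fc w))) = entropy p (fun w => (fa w, fb w, fc w)).
  by apply: (entropy_relabel (u := fun t => (t.1, (phi t.1.1 t.2, t.2))) (v := fun t => (t.1, t.2.2)))
    => // w /fxE ->.
have EB : entropy p (fun w => (fb w, (fx w, fc w))) = entropy p (fun w => (fx w, fb w, fc w)).
  exact: (entropy_relabel (u := fun t => (t.1.2, (t.1.1, t.2))) (v := fun t => (t.2.1, t.1, t.2.2))).
have := cmi_ge0 fa fb (fun w => (fx w, fc w)).
rewrite /cmutinfo EA EAB EB; lra.
Qed.

Section DoubleMarkov.
Variables (TC TX TY : finType) (fC : O -> TC) (fX : O -> TX) (fY : O -> TY).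
Hypothesis CY_X : cond_indep fC fY fX.
Hypothesis CX_Y : cond_indep fC fX fY.

Let fXY w := (fX w, fY w).
Let e := gk_edge p fX fY.
Let Q := gk_common p fX fY.

Let law_at (u : TX + TY) (c : TC) : R :=
  match u with
  | inl x => dist p (fun w => (fC w, fX w)) (c, x) / dist p fX x
  | inr y => dist p (fun w => (fC w, fY w)) (c, y) / dist p fY y
  end.

Let dist_XY_pos_X x y : 0 < dist p fXY (x, y) -> 0 < dist p fX x.
Proof. by move=> /lt_le_trans; apply; apply: dist_mono => w /andP[]. Qed.

Let dist_XY_pos_Y x y : 0 < dist p fXY (x, y) -> 0 < dist p fY y.
Proof. by move=> /lt_le_trans; apply; apply: dist_mono => w /andP[]. Qed.

Let factor_at_X c x y : 0 < dist p fXY (x, y) ->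
  dist p (fun w => (fC w, fXY w)) (c, (x, y)) = law_at (inl x) c * dist p fXY (x, y).
Proof.
move=> pxy; rewrite (@dist_relabel _ _ _ (fun w => (fC w, fY w, fX w)) _ (c, y, x)); last first.
  by move=> w; rewrite !xpair_eqE; case: (_ == c); case: (_ == x); case: (_ == y).
by rewrite cond_indepE ?(dist_XY_pos_X pxy) // (dist_swap fX fY).
Qed.

Let factor_at_Y c x y : 0 < dist p fXY (x, y) ->
  dist p (fun w => (fC w, fXY w)) (c, (x, y)) = law_at (inr y) c * dist p fXY (x, y).
Proof.
move=> pxy; rewrite (@dist_relabel _ _ _ (fun w => (fC w, fX w, fY w)) _ (c, x, y)); last first.
  by move=> w; rewrite !xpair_eqE andbA.
by rewrite cond_indepE ?(dist_XY_pos_Y pxy).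
Qed.

(* Hence the conditional law of C is constant along edges, thus on connected
   components, i.e. it only depends on the common part. *)
Let law_at_edge u v : e u v -> law_at u =1 law_at v.
Proof.
case: u => [x|y]; case: v => [x'|y'] //= pxy c; apply: (mulIf (lt0r_neq0 pxy)).
  by rewrite -factor_at_X // -factor_at_Y.
by rewrite -factor_at_Y // -factor_at_X.
Qed.

Let law_at_root u : law_at (fingraph.root e u) =1 law_at u.
Proof.
have /connectP [s es ->] := connect_root e u.
elim: s u es => [//|v s IHs] u /= /andP[euv evs] c.
by rewrite IHs // (law_at_edge euv).
Qed.

Let factor_at_root c x y :
  dist p (fun w => (fC w, fXY w)) (c, (x, y)) =
  law_at (fingraph.root e (inl x)) c * dist p fXY (x, y).
Proof.
have [pxy0|pxy] := eqVneq (dist p fXY (x, y)) 0.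
  rewrite pxy0 mulr0; apply/eqP; rewrite eq_le dist_ge0 andbT -pxy0.
  by apply: dist_mono => w /andP[_].
by rewrite law_at_root factor_at_X // lt0r pxy dist_ge0.
Qed.

(* Q is a function of X, so adjoining it only selects a component. *)
Let dist_CXYQ c x y q : dist p (fun w => (fC w, fXY w, Q w)) (c, (x, y), q) =
  if fingraph.root e (inl x) == q then dist p (fun w => (fC w, fXY w)) (c, (x, y)) else 0.
Proof. exact: (dist_graph (fun w => (fC w, fXY w)) (fun t => fingraph.root e (inl t.2.1))). Qed.

Let dist_XYQ x y q : dist p (fun w => (fXY w, Q w)) ((x, y), q) =
  if fingraph.root e (inl x) == q then dist p fXY (x, y) else 0.
Proof. exact: (dist_graph fXY (fun t => fingraph.root e (inl t.1))). Qed.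

Let dist_CQ c q : dist p (fun w => (fC w, Q w)) (c, q) = law_at q c * dist p Q q.
Proof.
rewrite (dist_marg _ fXY) (dist_marg Q fXY) mulr_sumr; apply: eq_bigr => -[x y] _.
rewrite (@dist_relabel _ _ _ (fun w => (fC w, fXY w, Q w)) _ (c, (x, y), q)); last first.
  by move=> w; rewrite !xpair_eqE -!andbA; congr (_ && _); rewrite andbC -!andbA.
rewrite dist_swap dist_CXYQ dist_XYQ; case: eqP => [<-|]; last by rewrite mulr0.
by rewrite factor_at_root.
Qed.

Lemma double_markov : cond_indep fC fXY Q.
Proof.
move=> c [x y] q; rewrite dist_CXYQ dist_XYQ dist_CQ.
by case: eqP => [<-|]; [rewrite factor_at_root; ring | rewrite !mul0r mulr0].
Qed.

(* I(X;Y|C) - RI(X;Y) = H(Q|C) + I(C;X,Y|Q) - I(C;X|Y) - I(C;Y|X) >= 0. *)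
Lemma resinfo_le_cmi_markov : resinfo p fX fY <= cmutinfo p fX fY fC.
Proof.
have CY_X0 := cmi_eq0 CY_X; have CX_Y0 := cmi_eq0 CX_Y.
have CXY_Q0 := cmi_eq0 double_markov; have HC_le := entropy_le_pair Q fC.
rewrite /cmutinfo in CY_X0 CX_Y0 CXY_Q0.
rewrite (entropy_swap fC fX) (entropy_swap fY fX) (entropy_swap fC Q) in CY_X0 CXY_Q0.
rewrite (entropy_swap fC fY) in CX_Y0.
have E1 : entropy p (fun w => (fC w, fY w, fX w)) = entropy p (fun w => (fX w, fY w, fC w)).
  exact: (entropy_relabel (u := fun t => (t.2, t.1.2, t.1.1)) (v := fun t => (t.2, t.1.2, t.1.1))).
have E2 : entropy p (fun w => (fC w, fX w, fY w)) = entropy p (fun w => (fX w, fY w, fC w)).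
  exact: (entropy_relabel (u := fun t => (t.2, t.1.1, t.1.2)) (v := fun t => (t.1.2, t.2, t.1.1))).
have E3 : entropy p (fun w => (fXY w, Q w)) = entropy p fXY.
  exact: (entropy_relabel (u := fun t => (t, fingraph.root e (inl t.1))) (v := fst)).
have E4 : entropy p (fun w => (fC w, fXY w, Q w)) = entropy p (fun w => (fX w, fY w, fC w)).
  exact: (entropy_relabel (u := fun t => (t.2, (t.1.1, t.1.2), fingraph.root e (inl t.1.1)))
    (v := fun t => (t.1.2.1, t.1.2.2, t.1.1))).
rewrite E1 in CY_X0; rewrite E2 in CX_Y0; rewrite E3 E4 in CXY_Q0.
rewrite /resinfo /mutinfo /cmutinfo -/Q; lra.
Qed.

End DoubleMarkov.

Lemma resinfo_le_cmi (TA TB TC TX TY : finType) (fA : O -> TA) (fB : O -> TB) (fC : O -> TC)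
    (fX : O -> TX) (fY : O -> TY) (phiX : TA -> TC -> TX) (phiY : TB -> TC -> TY) :
  (forall w, p w != 0 -> fX w = phiX (fA w) (fC w)) ->
  (forall w, p w != 0 -> fY w = phiY (fB w) (fC w)) ->
  cond_indep fC fY fX -> cond_indep fC fX fY ->
  resinfo p fX fY <= cmutinfo p fA fB fC.
Proof.
move=> fXE fYE CY_X CX_Y.
apply: (le_trans (resinfo_le_cmi_markov CY_X CX_Y)).
apply: (le_trans (cmi_data_processing fY fXE)).
by rewrite cmi_sym [X in _ <= X]cmi_sym; apply: (cmi_data_processing fA fYE).
Qed.

End FiniteProbability.

Section IndependentProduct.
Variables (R : realType) (T Rt : finType) (PX : {ffun T -> R}) (PR : {ffun Rt -> R}).
Hypotheses (PX_ge0 : forall t, 0 <= PX t) (PX_sum1 : \sum_t PX t = 1).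
Hypotheses (PR_ge0 : forall r, 0 <= PR r) (PR_sum1 : \sum_r PR r = 1).

Lemma joint_ge0 w : 0 <= joint PX PR w.
Proof. by rewrite ffunE mulr_ge0. Qed.

Lemma joint_sum1 : \sum_w joint PX PR w = 1.
Proof.
under eq_bigr do rewrite ffunE.
rewrite -(pair_bigA _ (fun t r => PX t * PR r)) -PX_sum1.
by apply: eq_bigr => t _; rewrite -mulr_sumr PR_sum1 mulr1.
Qed.

Lemma joint_supp w : joint PX PR w != 0 -> PX w.1 != 0 /\ 0 < PR w.2.
Proof. by rewrite ffunE mulf_eq0 negb_or => /andP[-> pr]; rewrite lt0r pr PR_ge0. Qed.

Lemma joint_dist (V : finType) (F : T * Rt -> V) v :
  dist (joint PX PR) F v = \sum_t PX t * dist PR (fun r => F (t, r)) v.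
Proof.
rewrite /dist big_mkcond.
transitivity (\sum_t \sum_r (if F (t, r) == v then PX t * PR r else 0)).
  by rewrite pair_bigA; apply: eq_bigr => -[t r] _; rewrite ffunE.
apply: eq_bigr => t _; rewrite [in RHS]big_mkcond mulr_sumr; apply: eq_bigr => r _.
by case: ifP; rewrite ?mulr0.
Qed.

Lemma joint_dist_det (K : finType) (k : T -> K) x :
  dist (joint PX PR) (fun w => k w.1) x = \sum_t PX t * (if k t == x then 1 else 0).
Proof. by rewrite joint_dist /=; under eq_bigr do rewrite (dist_const PR_sum1). Qed.

Lemma joint_dist_pair (K C : finType) (s : T -> Rt -> C) (k : T -> K) c x :
  dist (joint PX PR) (fun w => (s w.1 w.2, k w.1)) (c, x) =
  \sum_t PX t * (if k t == x then dist PR (s t) c else 0).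
Proof. by rewrite joint_dist /=; under eq_bigr do rewrite dist_pair_const. Qed.

Lemma joint_cond_indep (K L C : finType) (kx : T -> K) (ky : T -> L) (s : T -> Rt -> C) :
  (forall t t', PX t != 0 -> PX t' != 0 -> kx t = kx t' ->
     forall c, dist PR (s t) c = dist PR (s t') c) ->
  cond_indep (joint PX PR) (fun w => s w.1 w.2) (fun w => ky w.1) (fun w => kx w.1).
Proof.
move=> s_law c y x.
have [l s_lawE] : exists l, forall t, PX t != 0 -> kx t = x -> dist PR (s t) c = l.
  have [t0 /andP[/eqP kt0 pt0]|none] := pickP (fun t => (kx t == x) && (PX t != 0)).
    by exists (dist PR (s t0) c) => t pt kt; apply: s_law; rewrite ?kt.
  by exists 0 => t pt kt; move: (none t); rewrite /= kt eqxx pt.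
have fiber (P : pred T) : (forall t, P t -> kx t = x) ->
    \sum_t PX t * (if P t then dist PR (s t) c else 0) =
    l * \sum_t PX t * (if P t then 1 else 0).
  move=> Px; rewrite mulr_sumr; apply: eq_bigr => t _.
  have [->|pt] := eqVneq (PX t) 0; first by rewrite !mul0r mulr0.
  by case: ifP => [/Px /(s_lawE t pt) ->|_]; rewrite ?mulr0 // mulr1 mulrC.
rewrite (@dist_relabel _ _ _ _ _ _ (fun w => (s w.1 w.2, (ky w.1, kx w.1))) _ (c, (y, x)));
  last by move=> w; rewrite !xpair_eqE andbA.
rewrite (joint_dist_pair s (fun t => (ky t, kx t))) joint_dist_pair.
rewrite (joint_dist_det (fun t => (ky t, kx t))) joint_dist_det !fiber /=.
- by ring.
- by move=> t /eqP.
- by move=> t /eqP [].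
Qed.

(* The information inequality for one party of a secret sharing scheme with
   shares sa, sb, sc: the party's input kx is decoded from its view (sa, sc),
   the next party's input ky from its view (sc, sb), and perfect privacy of
   both views yields the two conditional independences. *)
Lemma scheme_resinfo_le_cmi (S : {set T}) (W A B C TX TY : finType) (psi : T -> Rt -> W)
    (sa : W -> A) (sb : W -> B) (sc : W -> C) (kx : T -> TX) (ky : T -> TY)
    (decX : A * C -> TX) (decY : C * B -> TY) :
  (forall t, PX t != 0 -> t \in S) ->
  (forall t r, t \in S -> 0 < PR r -> decX (sa (psi t r), sc (psi t r)) = kx t) ->
  (forall t r, t \in S -> 0 < PR r -> decY (sc (psi t r), sb (psi t r)) = ky t) ->
  (forall t t', t \in S -> t' \in S -> kx t = kx t' -> forall v,
     share_dist PR (fun r => (sa (psi t r), sc (psi t r))) v =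
     share_dist PR (fun r => (sa (psi t' r), sc (psi t' r))) v) ->
  (forall t t', t \in S -> t' \in S -> ky t = ky t' -> forall v,
     share_dist PR (fun r => (sc (psi t r), sb (psi t r))) v =
     share_dist PR (fun r => (sc (psi t' r), sb (psi t' r))) v) ->
  resinfo (joint PX PR) (fun w => kx w.1) (fun w => ky w.1) <=
  cmutinfo (joint PX PR) (fun w => sa (psi w.1 w.2)) (fun w => sb (psi w.1 w.2))
    (fun w => sc (psi w.1 w.2)).
Proof.
move=> inS decXE decYE privX privY.
apply: (@resinfo_le_cmi _ _ _ joint_ge0 joint_sum1 _ _ _ _ _
  (fun w => sa (psi w.1 w.2)) (fun w => sb (psi w.1 w.2)) (fun w => sc (psi w.1 w.2))
  (fun w => kx w.1) (fun w => ky w.1) (fun a c => decX (a, c)) (fun b c => decY (c, b))).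
- by move=> w /joint_supp [/inS tS pr] /=; rewrite decXE.
- by move=> w /joint_supp [/inS tS pr] /=; rewrite decYE.
- apply: (@joint_cond_indep _ _ _ kx ky (fun t r => sc (psi t r))) => t t' /inS tS /inS t'S kt c.
  rewrite (dist_comp _ (fun r => (sa (psi t r), sc (psi t r))) snd).
  rewrite (dist_comp _ (fun r => (sa (psi t' r), sc (psi t' r))) snd).
  by apply: eq_bigr => v _; apply: privX.
- apply: (@joint_cond_indep _ _ _ ky kx (fun t r => sc (psi t r))) => t t' /inS tS /inS t'S kt c.
  rewrite (dist_comp _ (fun r => (sc (psi t r), sb (psi t r))) fst).
  rewrite (dist_comp _ (fun r => (sc (psi t' r), sb (psi t' r))) fst).
  by apply: eq_bigr => v _; apply: privY.
Qed.

End IndependentProduct.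

Theorem mainTheorem4 (R : realType) (T1 T2 T3 : finType) (S : {set T1 * T2 * T3})
  (HS : S != set0) (Rt W12 W23 W31 : finType) (PR : {ffun Rt -> R})
  (psi : T1 * T2 * T3 -> Rt -> W12 * W23 * W31)
  (H3SS : is_3SS S PR psi)
  (PX : {ffun T1 * T2 * T3 -> R}) (HPX : is_pmf PX)
  (Hsupp : forall x, PX x != 0 -> x \in S) :
  let P := joint PX PR in
  let X1 := fun w : T1 * T2 * T3 * Rt => w.1.1.1 in
  let X2 := fun w : T1 * T2 * T3 * Rt => w.1.1.2 in
  let X3 := fun w : T1 * T2 * T3 * Rt => w.1.2 in
  let w12 := fun w : T1 * T2 * T3 * Rt => (psi w.1 w.2).1.1 in
  let w23 := fun w : T1 * T2 * T3 * Rt => (psi w.1 w.2).1.2 in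
  let w31 := fun w : T1 * T2 * T3 * Rt => (psi w.1 w.2).2 in
  [/\ resinfo P X1 X3 <= cmutinfo P w12 w23 w31,
      resinfo P X2 X1 <= cmutinfo P w23 w31 w12 &
      resinfo P X3 X2 <= cmutinfo P w31 w12 w23].
Proof.
move=> P X1 X2 X3 w12 w23 w31.
case: HPX => PX_ge0 PX_sum1.
case: H3SS => -[PR_ge0 PR_sum1] [dec1 dec1E] [dec2 dec2E] [dec3 dec3E] [priv1 priv2 priv3].
have bound := scheme_resinfo_le_cmi PX_ge0 PX_sum1 PR_ge0 PR_sum1 Hsupp.
(* Each inequality pairs a party with its predecessor; the share they both
   hold plays the role of C. *)
split.
- exact: (bound _ _ _ _ _ _ _ (fun s => s.1.1) (fun s => s.1.2) (fun s => s.2)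
    (fun t => t.1.1) (fun t => t.2) _ _ dec1E dec3E priv1 priv3).
- exact: (bound _ _ _ _ _ _ _ (fun s => s.1.2) (fun s => s.2) (fun s => s.1.1)
    (fun t => t.1.2) (fun t => t.1.1) _ _ dec2E dec1E priv2 priv1).
- exact: (bound _ _ _ _ _ _ _ (fun s => s.2) (fun s => s.1.1) (fun s => s.1.2)
    (fun t => t.2) (fun t => t.1.2) _ _ dec3E dec2E priv3 priv2).
Qed.
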